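(* Let $N\ge2$, $d\ge1$ and consider the system $$\dot x_i(t)=\frac{\lambda_i(x)}{N}\sum_{j=1}^N M_{ij}(t)\,\phi_{ij}(x_i,x_j)\,(x_j(t)-x_i(t)),\qquad i=1,\dots,N,$$ with $x_i\in\mathbb{R}^d$, where all $M_{ij}:[0,+\infty)\to[0,1]$ are Lebesgue measurable and $\lambda_i:\mathbb{R}^{Nd}\to\mathbb{R}^+$, $\phi_{ij}:\mathbb{R}^d\times\mathbb{R}^d\to\mathbb{R}^+$ are Lipschitz continuous and strictly positive. Let $x(t)$ be a (Carathéodory) solution and let $\underline m,\overline m$ be the minimum and maximum of $\lambda_i(y)\phi_{ij}(y_i,y_j)$ over all $i,j\in\{1,\dots,N\}$ and all $y\in\mathbb{R}^{Nd}$ with $|y_k|\le\max_l|x_l(0)|$ for every $k$. Assume the Persistent Excitation condition holds with parameters $(T,\mu)$, $T,\mu>0$: for all indices $i,j$ and all $t\ge0$, $\frac1T\int_t^{t+T}M_{ij}(s)\,ds\ge\mu$. Then for all $n\in\mathbb{N}$, $$\max_{i,j}|x_i(nT)-x_j(nT)|\le C^n\max_{i,j}|x_i(0)-x_j(0)|,\qquad C=1-\frac12\left(\frac{\underline m\mu T}{N+\underline m\mu T}\right)\exp\!\left(-2\tfrac{N-1}{N}T\overline m\right).$$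
   Context: $|\cdot|$ is the Euclidean norm; $\mathbb{N}$ includes $0$. *)

From HB Require Import structures.
From mathcomp Require Import all_boot all_order all_algebra.
From mathcomp Require Import all_classical all_reals all_analysis.
Set Implicit Arguments. Unset Strict Implicit. Unset Printing Implicit Defensive.
Import Order.TTheory GRing.Theory Num.Theory.
Import numFieldNormedType.Exports.
Local Open Scope classical_set_scope.
Local Open Scope ring_scope.

Definition enorm (R : realType) (d : nat) (v : 'rV[R]_d) : R :=
  Num.sqrt (\sum_(k < d) v ord0 k ^+ 2).

Definition config (R : realType) (N d : nat) := 'I_N -> 'rV[R]_d.

Definition cnorm (R : realType) (N d : nat) (y : config R N d) : R :=
  Num.sqrt (\sum_(i < N) \sum_(k < d) y i ord0 k ^+ 2).

Definition lipschitz_config (R : realType) (N d : nat) (f : config R N d -> R) :=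
  exists L : R, forall y z : config R N d,
    `|f y - f z| <= L * cnorm (fun i => y i - z i).

Definition lipschitz_pair (R : realType) (d : nat) (f : 'rV[R]_d -> 'rV[R]_d -> R) :=
  exists L : R, forall a b a' b' : 'rV[R]_d,
    `|f a b - f a' b'| <= L * Num.sqrt (enorm (a - a') ^+ 2 + enorm (b - b') ^+ 2).

Definition rhs (R : realType) (N d : nat) (lam : 'I_N -> config R N d -> R)
  (phi : 'I_N -> 'I_N -> 'rV[R]_d -> 'rV[R]_d -> R) (M : 'I_N -> 'I_N -> R -> R)
  (x : R -> config R N d) (i : 'I_N) (k : 'I_d) (s : R) : R :=
  lam i (x s) / N%:R *
    \sum_(j < N) M i j s * phi i j (x s i) (x s j) * (x s j ord0 k - x s i ord0 k).

Definition caratheodory_solution (R : realType) (N d : nat)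
  (lam : 'I_N -> config R N d -> R) (phi : 'I_N -> 'I_N -> 'rV[R]_d -> 'rV[R]_d -> R)
  (M : 'I_N -> 'I_N -> R -> R) (x : R -> config R N d) : Prop :=
  forall (t : R), 0 <= t -> forall (i : 'I_N) (k : 'I_d),
    (lebesgue_measure : measure _ R).-integrable `[0, t] (EFin \o rhs lam phi M x i k) /\
    x t i ord0 k = x 0 i ord0 k + Rintegral lebesgue_measure `[0, t] (rhs lam phi M x i k).

Definition config_diam (R : realType) (N d : nat) (y : config R N d) : R :=
  \big[Num.max/0]_(i < N) \big[Num.max/0]_(j < N) enorm (y i - y j).

Definition config_radius (R : realType) (N d : nat) (y : config R N d) : R :=
  \big[Num.max/0]_(l < N) enorm (y l).

(* Projected onto any direction w, the agents satisfy a scalar linear consensus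
   system y_i' = sum_j a_ij (y_j - y_i) with weights a_ij >= 0, so min_j y_j never
   decreases and max_j y_j never increases; since solutions are only absolutely
   continuous, this is a Gronwall argument on the negative parts of y_j - min y.
   Taking w = x_i(t) keeps every agent in the initial ball, which yields
   (m_lo / N) M_ij <= a_ij <= m_hi / N.
   On a window [t, t + T], some agent k starts at least half the range D of the
   projection above its minimum (or, symmetrically, below its maximum).  With
   alpha = (N - 1) m_hi / N, a comparison argument keeps y_k at least
   exp(-alpha T) D above the minimum, and the persistent excitation of M_ik then
   lifts every other y_i by exp(-2 alpha T) (m_lo mu T / N) D.  Both exceed
   exp(-2 alpha T) q D with q = m_lo mu T / (N + m_lo mu T), so the range of every
   projection contracts by C = 1 - exp(-2 alpha T) q / 2 over each window, and
   w = x_p - x_q turns this into |x_p - x_q| <= C diam. *)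

From HB Require Import structures.
From mathcomp Require Import all_boot all_order all_algebra.
From mathcomp Require Import all_classical all_reals all_analysis.
From mathcomp Require Import lra ring.
Import Order.TTheory GRing.Theory Num.Theory.
Import numFieldNormedType.Exports.
Local Open Scope classical_set_scope.
Local Open Scope ring_scope.

Section SegmentIntegral.
Context {R : realType}.
Local Notation mu := (@lebesgue_measure R).

Definition seg_integrable (a b : R) (f : R -> R) := mu.-integrable `[a, b] (EFin \o f).
Definition seg_int (a b : R) (f : R -> R) := \int[mu]_(s in `[a, b]) f s.

Implicit Types (a b c : R) (f g : R -> R).

Lemma seg_integrableS {a b a' b' f} : a <= a' -> b' <= b ->
  seg_integrable a b f -> seg_integrable a' b' f.
Proof. by move=> aa' b'b; apply: integrableS => //; apply: subset_itv; rewrite bnd_simp. Qed.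


Lemma seg_integrableB a b f g : seg_integrable a b f -> seg_integrable a b g ->
  seg_integrable a b (fun s => f s - g s).
Proof. exact: integrableB. Qed.

Lemma seg_integrableZ a b k f : seg_integrable a b f ->
  seg_integrable a b (fun s => k * f s).
Proof. exact: integrableZl. Qed.

Lemma seg_integrableN a b f : seg_integrable a b f -> seg_integrable a b (fun s => - f s).
Proof. exact: integrableN. Qed.

Lemma seg_integrable_sum (I : Type) (r : seq I) (P : pred I) (F : I -> R -> R) a b :
  (forall k, P k -> seg_integrable a b (F k)) ->
  seg_integrable a b (fun s => \sum_(k <- r | P k) F k s).
Proof.
move=> hF; apply: eq_integrable (integrable_sum _ _ hF) => //= s _.
by rewrite sumEFin.
Qed.

Lemma continuous_seg_integrable a b f : continuous f -> seg_integrable a b f.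
Proof.
move=> cf; apply: continuous_compact_integrable; first exact: segment_compact.
exact: continuous_subspaceT.
Qed.

Lemma seg_integrable_bounded (D : set R) (C : R) a b f : measurable D -> `[a, b] `<=` D ->
  measurable_fun D f -> (forall t, D t -> `|f t| <= C) -> seg_integrable a b f.
Proof.
move=> mD abD mf fC; apply: measurable_bounded_integrable => //.
- by apply: compact_finite_measure; exact: segment_compact.
- exact: measurable_funS mf.
exists C; split; first exact: num_real.
by move=> K CK t /abD Dt; rewrite /= (le_trans (fC t Dt)) // ltW.
Qed.

Lemma seg_int_pt a f : seg_int a a f = 0.
Proof. by rewrite /seg_int set_itv1 Rintegral_set1. Qed.

Lemma seg_int_split {a b c f} : a <= b -> b <= c -> seg_integrable a c f ->
  seg_int a c f = seg_int a b f + seg_int b c f.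
Proof.
move=> ab bc hf; have := @Rintegral_itvB _ f (BLeft a) (BRight c) b hf.
rewrite Rintegral_itv_obnd_cbnd ?bnd_simp //; last first.
  by apply: integrableS hf => //; apply: subset_itv; rewrite bnd_simp.
by rewrite /seg_int => /(_ ab bc) <-; rewrite addrC subrK.
Qed.

Lemma seg_int_ge0 a b f : (forall s, a <= s <= b -> 0 <= f s) -> 0 <= seg_int a b f.
Proof. by move=> f0; apply: Rintegral_ge0 => s; rewrite /= in_itv; exact: f0. Qed.

Lemma le_seg_int a b f g : seg_integrable a b f -> seg_integrable a b g ->
  (forall s, a < s <= b -> f s <= g s) -> seg_int a b f <= seg_int a b g.
Proof.
move=> hf hg fg.
have sub : `]a, b] `<=` `[a, b] by apply: subset_itv; rewrite bnd_simp.
have hf' : mu.-integrable `]a, b] (EFin \o f) by exact: integrableS hf.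
have hg' : mu.-integrable `]a, b] (EFin \o g) by exact: integrableS hg.
rewrite /seg_int -!Rintegral_itv_obnd_cbnd //; exact: le_Rintegral.
Qed.

Lemma seg_intD a b f g : seg_integrable a b f -> seg_integrable a b g ->
  seg_int a b (fun s => f s + g s) = seg_int a b f + seg_int a b g.
Proof. exact: RintegralD. Qed.

Lemma seg_intB a b f g : seg_integrable a b f -> seg_integrable a b g ->
  seg_int a b (fun s => f s - g s) = seg_int a b f - seg_int a b g.
Proof. exact: RintegralB. Qed.

Lemma seg_intZ a b k f : seg_integrable a b f ->
  seg_int a b (fun s => k * f s) = k * seg_int a b f.
Proof. exact: RintegralZl. Qed.

Lemma seg_intN a b f : seg_integrable a b f -> seg_int a b (fun s => - f s) = - seg_int a b f.
Proof.
move=> hf; rewrite -mulN1r -seg_intZ //.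
by apply: eq_Rintegral => s _; rewrite mulN1r.
Qed.

Lemma seg_int_cst0 a b : seg_int a b (fun=> 0) = 0.
Proof. by rewrite /seg_int Rintegral_cst // mul0r. Qed.

Lemma seg_int_sum (I : Type) (r : seq I) (P : pred I) (F : I -> R -> R) a b :
  (forall k, P k -> seg_integrable a b (F k)) ->
  seg_int a b (fun s => \sum_(k <- r | P k) F k s) = \sum_(k <- r | P k) seg_int a b (F k).
Proof.
move=> hF; elim: r => [|k r IH].
  rewrite big_nil -[RHS](seg_int_cst0 a b); apply: eq_Rintegral => s _ /=; by rewrite big_nil.
rewrite big_cons -IH; case: ifP => Pk; last first.
  by apply: eq_Rintegral => s _; rewrite big_cons Pk.
rewrite -seg_intD ?hF //; last exact: seg_integrable_sum.
by apply: eq_Rintegral => s _; rewrite big_cons Pk.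
Qed.

Lemma continuous_seg_int {a b f} : a <= b -> seg_integrable a b f ->
  {within `[a, b], continuous (fun t => seg_int a t f)}.
Proof. exact: parameterized_integral_continuous. Qed.

Lemma is_derive_expR_affine c (e x : R) :
  is_derive x 1 (fun s => expR (c * s + e)) (c * expR (c * x + e)).
Proof.
rewrite mulrC; apply: (is_derive1_comp (f := expR) (g := fun s => c * s + e)).
rewrite -[X in is_derive _ _ _ X]addr0 -[X in is_derive _ _ _ (X + _)]mulr1.
exact: (is_deriveD (f := c *: id) (g := cst e)).
Qed.

Lemma continuous_expR_affine c (e : R) : continuous (fun s => expR (c * s + e)).
Proof.
move=> s; apply/differentiable_continuous/derivable1_diffP.
by have [] := is_derive_expR_affine c e s.
Qed.

Lemma seg_int_expR_affine c (e : R) {a b} : a <= b ->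
  seg_int a b (fun s => c * expR (c * s + e)) = expR (c * b + e) - expR (c * a + e).
Proof.
rewrite le_eqVlt => /predU1P[->|ab]; first by rewrite seg_int_pt subrr.
have cE := continuous_expR_affine c e.
rewrite /seg_int /Rintegral (@continuous_FTC2 _ _ (fun s => expR (c * s + e)) _ _ ab) //.
- apply: continuous_subspaceT => s.
  by apply: cvgM; [exact: cvg_cst | exact: cE].
- split; first by move=> s _; have [] := is_derive_expR_affine c e s.
  + exact/cvg_at_right_filter/cE.
  + exact/cvg_at_left_filter/cE.
- by move=> s _; rewrite derive1E; have [] := is_derive_expR_affine c e s.
Qed.

End SegmentIntegral.

Section IntegralInequalities.
Context {R : realType}.

Lemma last_nonneg_time {e : R -> R} {a t : R} : a <= t ->
  {within `[a, t], continuous e} -> 0 <= e a -> e t < 0 ->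
  exists s0, [/\ a <= s0, s0 < t, 0 <= e s0 & forall s, s0 < s -> s <= t -> e s < 0].
Proof.
move=> at0 ce ea et.
pose S := [set s | a <= s <= t /\ 0 <= e s].
have Sa : S a by split; rewrite // lexx at0.
have Sle : ubound S t by move=> s [/andP[]].
have hS : has_sup S by split; [exists a | exists t].
set s0 := sup S.
have as0 : a <= s0 by exact: sup_upper_bound.
have s0t : s0 <= t by apply: ge_sup => //; exists a.
have es0 : 0 <= e s0.
  rewrite leNgt; apply/negP => es0.
  have s0in : [set` `[a, t]] s0 by rewrite /= in_itv /= as0 s0t.
  have /subspace_continuousP /(_ s0 s0in) /cvgrPdist_lt /(_ (- e s0)) := ce.
  rewrite oppr_gt0 => /(_ es0); rewrite near_withinE => /nbhs_ballP [del del0 hdel].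
  have [s [/andP[sa st] es] s0s] := sup_adherent del0 hS.
  have ss0 : s <= s0 by apply: sup_upper_bound => //; rewrite /S /= sa st.
  have : ball s0 del s by rewrite /ball /= ger0_norm ?subr_ge0 // ltrBlDr addrC -ltrBlDr.
  have sin : [set` `[a, t]] s by rewrite /= in_itv /= sa st.
  move=> /hdel /(_ sin) near.
  have {}near : `|e s0 - e s| < - e s0 := near.
  by move: (ler_norm (e s - e s0)) es; rewrite distrC; lra.
exists s0; split => //.
  by rewrite lt_neqAle s0t andbT; apply: contraTneq es0 => ->; rewrite -ltNge.
move=> s s0s st; rewrite ltNge; apply/negP => es.
suff : s <= s0 by rewrite leNgt s0s.
by apply: sup_upper_bound => //; rewrite /S /= st (le_trans as0 (ltW s0s)).
Qed.

Lemma exp_ceiling_seg_int_bound {al e K s0 t1 : R} {z h b : R -> R} :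
  0 <= al -> s0 <= t1 -> seg_integrable s0 t1 h -> seg_integrable s0 t1 b ->
  (forall s, s0 < s <= t1 -> b s - al * z s <= h s) ->
  (forall s, s0 < s <= t1 -> z s <= K * expR (- al * s + e)) ->
  seg_int s0 t1 b - K * (expR (- al * s0 + e) - expR (- al * t1 + e)) <= seg_int s0 t1 h.
Proof.
move=> al0 s0t1 ih ib hh z_le; pose E s := expR (- al * s + e).
have iE c : seg_integrable s0 t1 (fun s => c * E s).
  exact/seg_integrableZ/continuous_seg_integrable/continuous_expR_affine.
have -> : K * (E s0 - E t1) = seg_int s0 t1 (fun s => K * al * E s).
  transitivity (- K * seg_int s0 t1 (fun s => - al * E s)).
    by rewrite seg_int_expR_affine // /E; ring.
  by rewrite -seg_intZ //; apply: eq_Rintegral => s _; ring.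
rewrite -seg_intB //; apply: le_seg_int; [exact: seg_integrableB | exact: ih |].
move=> s s_in; apply: le_trans (hh s s_in); rewrite lerD2l lerN2.
by rewrite mulrAC [X in _ <= X]mulrC ler_wpM2l ?z_le.
Qed.

Lemma comparison_principle {al c t0 t1 : R} {z h b : R -> R} :
  0 <= al -> t0 <= t1 ->
  seg_integrable t0 t1 h -> seg_integrable t0 t1 b ->
  (forall t, t0 <= t <= t1 -> z t = z t0 + seg_int t0 t h) ->
  (forall s, t0 <= s <= t1 -> 0 <= b s) ->
  (forall s, t0 <= s <= t1 -> b s - al * z s <= h s) ->
  c <= z t0 ->
  expR (- al * (t1 - t0)) * (c + seg_int t0 t1 b) <= z t1.
Proof.
move=> al0 t01 ih ib hz b0 hh zc.
pose E s := expR (- al * s + al * t0).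
pose B s := seg_int t0 s b.
have E_le1 s : t0 <= s -> E s <= 1 by move=> ts; rewrite /E expR_le1; nra.
have B_le s : t0 <= s <= t1 -> B s <= B t1.
  move=> /andP[ts st]; rewrite /B (seg_int_split ts st ib) lerDl.
  by apply: seg_int_ge0 => r /andP[sr rt]; apply: b0; rewrite rt (le_trans ts sr).
have -> : expR (- al * (t1 - t0)) = E t1 by rewrite /E; congr expR; ring.
rewrite leNgt; apply/negP => z_t1.
(* Barrier argument: after the last time [e] is nonnegative, [z] lies below the
   ceiling [(c + B t1) * E], which integrates to a contradiction. *)
pose e s := z t0 + seg_int t0 s h - E s * (c + B s).
have ce : {within `[t0, t1], continuous e}.
  have cE : {within `[t0, t1], continuous E}.
    exact/continuous_subspaceT/continuous_expR_affine.
  move=> s; apply: cvgB; first by apply: cvgD; [exact: cvg_cst | exact: continuous_seg_int].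
  by apply: cvgM; [exact: cE | apply: cvgD; [exact: cvg_cst | exact: continuous_seg_int]].
have e_t0 : 0 <= e t0 by rewrite /e /B !seg_int_pt /E mulNr addNr expR0; lra.
have e_t1 : e t1 < 0 by move: z_t1; rewrite /e /B -hz ?lexx ?t01 //; lra.
have [s0 [ts0 s0t es0 e_neg]] := last_nonneg_time t01 ce e_t0 e_t1.
have s0_in : t0 <= s0 <= t1 by rewrite ts0 ltW.
have z_s0 : E s0 * (c + B s0) <= z s0 by move: es0; rewrite /e -hz //; lra.
have after_s0 s : s0 < s <= t1 -> t0 <= s <= t1.
  by move=> /andP[s0s st]; rewrite st (le_trans ts0 (ltW s0s)).
have z_le s : s0 < s <= t1 -> z s <= (c + B t1) * E s.
  move=> s_in; have /andP[s0s st] := s_in.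
  have := e_neg s s0s st; rewrite /e -hz ?after_s0 // => zs.
  rewrite mulrC; apply: le_trans (ltW (_ : z s < E s * (c + B s))) _; first lra.
  by rewrite ler_wpM2l ?expR_ge0 // lerD2l B_le ?after_s0.
have lower := exp_ceiling_seg_int_bound al0 (ltW s0t) (seg_integrableS ts0 (lexx t1) ih)
  (seg_integrableS ts0 (lexx t1) ib) (fun s s_in => hh s (after_s0 s s_in)) z_le.
have int_h : seg_int s0 t1 h = z t1 - z s0.
  by rewrite (hz t1) ?t01 ?lexx // (hz s0) // (seg_int_split ts0 (ltW s0t) ih); ring.
have int_b : seg_int s0 t1 b = B t1 - B s0.
  by rewrite /B (seg_int_split ts0 (ltW s0t) ib); ring.
have : 0 <= (B t1 - B s0) * (1 - E s0) by rewrite mulr_ge0 // subr_ge0 ?B_le ?E_le1.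
have : E s0 * (c + B s0) + (B t1 - B s0) - (c + B t1) * (E s0 - E t1) =
  E t1 * (c + B t1) + (B t1 - B s0) * (1 - E s0) by ring.
have z_t1B : z t1 < E t1 * (c + B t1) := z_t1.
move: z_t1B z_s0 lower; rewrite int_h int_b -/(E s0) -/(E t1); lra.
Qed.


Lemma le0_of_le_pow2 (u c : R) : (forall n : nat, 2 ^+ n * u <= c) -> u <= 0.
Proof.
move=> h; rewrite leNgt; apply/negP => u_gt0.
pose n := Num.bound (`|c| / u).
have c_lt : c < u * n%:R.
  rewrite -ltr_pdivrMl //; apply: le_lt_trans (archi_boundP _).
    by rewrite mulrC ler_pM2r ?invr_gt0 // ler_norm.
  by rewrite divr_ge0 // ltW.
have n_le : (n%:R : R) <= 2 ^+ n by rewrite -natrX ler_nat ltnW // ltn_expl.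
by move: (h n) (ler_wpM2r (ltW u_gt0) n_le) c_lt; lra.
Qed.

Lemma gronwall_zero {L t0 t1 : R} {U : R -> R} : 0 <= L -> t0 <= t1 ->
  seg_integrable t0 t1 U -> (forall s, t0 <= s <= t1 -> 0 <= U s) ->
  (forall s, t0 <= s <= t1 -> U s <= L * seg_int t0 s U) ->
  forall s, t0 <= s <= t1 -> U s = 0.
Proof.
move=> L0 t01 iU U0 hU.
pose C := L * seg_int t0 t1 U.
have C0 : 0 <= C by rewrite mulr_ge0 // seg_int_ge0.
pose W r := expR (2 * L * r + - (2 * L * t0)).
have W_ge1 r : t0 <= r -> 1 <= W r by move=> tr; rewrite -expR0 ler_expR; nra.
have iW a b : seg_integrable a b W.
  exact/continuous_seg_integrable/continuous_expR_affine.
(* Each substitution of the bound into [U <= L * int U] halves it, as [int 2L W <= W]. *)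
have bound n s : t0 <= s <= t1 -> 2 ^+ n * U s <= C * W s.
  elim: n s => [|n IH] s /andP[ts st].
    rewrite expr0 mul1r (le_trans (hU s _)) ?ts ?st //.
    rewrite (le_trans _ (ler_peMr C0 (W_ge1 s ts))) // ler_wpM2l //.
    rewrite (seg_int_split ts st iU) lerDl.
    by apply: seg_int_ge0 => r /andP[sr rt]; rewrite U0 // rt (le_trans ts sr).
  have iUs := seg_integrableS (lexx t0) st iU.
  apply: le_trans (ler_wpM2l (exprn_ge0 _ (ler0n _ 2)) (hU s _)) _; first by rewrite ts st.
  have -> : 2 ^+ n.+1 * (L * seg_int t0 s U) = seg_int t0 s (fun r => 2 * L * (2 ^+ n * U r)).
    by rewrite !seg_intZ //; [rewrite exprS; ring | exact: seg_integrableZ].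
  apply: le_trans (_ : seg_int t0 s (fun r => C * (2 * L * W r)) <= _).
    apply: le_seg_int;
      [exact/seg_integrableZ/seg_integrableZ | exact/seg_integrableZ/seg_integrableZ |].
    move=> r /andP[tr rs]; rewrite [in leRHS]mulrCA ler_wpM2l ?mulr_ge0 //.
    by apply: IH; rewrite (ltW tr) (le_trans rs st).
  rewrite seg_intZ ?seg_int_expR_affine //; last exact: seg_integrableZ.
  by rewrite ler_wpM2l // gerBl expR_ge0.
move=> s hs; apply/eqP; rewrite eq_le U0 // andbT.
by apply: (le0_of_le_pow2 _ (C * W s)) => n; exact: bound.
Qed.

End IntegralInequalities.

Section LinearConsensus.
Context {R : realType} {N : nat}.
Implicit Types (y : 'I_N -> R -> R) (A : 'I_N -> 'I_N -> R -> R).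

Definition consensus_field y A i s := \sum_(j < N) A i j s * (y j s - y i s).

Definition consensus_solution y A := forall i t, 0 <= t ->
  seg_integrable 0 t (consensus_field y A i) /\
  y i t = y i 0 + seg_int 0 t (consensus_field y A i).

Definition nonneg_weights A := forall i j s, 0 <= s -> 0 <= A i j s.

Definition locally_bounded_weights A :=
  forall t, 0 <= t -> exists K, forall i j s, 0 <= s <= t -> A i j s <= K.

Lemma consensus_solution_from {y A} i {t0 t} : consensus_solution y A -> 0 <= t0 -> t0 <= t ->
  seg_integrable t0 t (consensus_field y A i) /\
  y i t = y i t0 + seg_int t0 t (consensus_field y A i).
Proof.
move=> ysol t00 t0t; have [int_t ->] := ysol i t (le_trans t00 t0t).
have [_ ->] := ysol i t0 t00.
by rewrite (seg_int_split t00 t0t int_t) addrA; split => //; exact: seg_integrableS int_t.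
Qed.

Lemma consensus_solutionN {y A} :
  consensus_solution y A -> consensus_solution (fun j r => - y j r) A.
Proof.
move=> ysol i t t0; have [int_t yt] := ysol i t t0.
have -> : consensus_field (fun j r => - y j r) A i = fun s => - consensus_field y A i s.
  by apply/funext => s; rewrite /consensus_field -sumrN; apply: eq_bigr => j _; ring.
by rewrite seg_intN // yt opprD; split => //; exact: seg_integrableN.
Qed.

Lemma consensus_sum_lower_bound (i : 'I_N) (a v : 'I_N -> R) (lo c : R) :
  (forall j, 0 <= a j <= c) -> (forall j, lo <= v j) ->
  \sum_(j | j != i) a j * (v j - lo) - (N%:R - 1) * c * (v i - lo) <=
  \sum_(j < N) a j * (v j - v i).
Proof.
move=> ha hv; rewrite [in leRHS](bigD1 i) //= subrr mulr0 add0r.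
have -> : (N%:R - 1) * c * (v i - lo) = \sum_(j | j != i) c * (v i - lo).
  have N_gt0 : (0 < N)%N by apply: leq_ltn_trans (ltn_ord i).
  by rewrite sumr_const cardC1 card_ord -[in RHS]mulr_natr -subn1 natrB //; ring.
rewrite -sumrB; apply: ler_sum => j _.
have [a0 ac] := andP (ha j); have := hv i; have := hv j => lj li.
have : a j * (v i - lo) <= c * (v i - lo) by rewrite ler_wpM2r // subr_ge0.
have -> : a j * (v j - v i) = a j * (v j - lo) - a j * (v i - lo) by ring.
lra.
Qed.

End LinearConsensus.

Section ConsensusInvariance.
Context {R : realType} {N : nat} (y : 'I_N -> R -> R) (A : 'I_N -> 'I_N -> R -> R).
Variables (t0 t1 K m : R).
Hypotheses (A0 : nonneg_weights A) (ysol : consensus_solution y A).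
Hypotheses (t00 : 0 <= t0) (t01 : t0 <= t1) (K0 : 0 <= K).
Hypotheses (A_le : forall i j s, t0 <= s <= t1 -> A i j s <= K) (y_ge : forall j, m <= y j t0).

Let t1_in : t0 <= t1 <= t1.
Proof. by rewrite t01 lexx. Qed.

Let h j := consensus_field y A j.
Let z j s := y j t0 - m + seg_int t0 s (h j).
Let u j s := `|z j s| - z j s.
Let U s := \sum_(j < N) u j s.

Let h_integrable j s : t0 <= s <= t1 -> seg_integrable t0 s (h j).
Proof. by move=> /andP[t0s _]; have [] := consensus_solution_from j ysol t00 t0s. Qed.

Let zE j s : t0 <= s <= t1 -> z j s = y j s - m.
Proof.
by move=> /andP[t0s _]; have [_ ->] := consensus_solution_from j ysol t00 t0s; rewrite /z; ring.
Qed.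

Let continuous_z j s : t0 <= s <= t1 -> {within `[t0, s], continuous (z j)}.
Proof.
move=> s_in r; apply: cvgD; first exact: cvg_cst.
by apply: continuous_seg_int; [case/andP: s_in | exact: h_integrable].
Qed.

Let u_ge0 j s : 0 <= u j s.
Proof. by rewrite subr_ge0 ler_norm. Qed.

Let U_ge0 s : 0 <= U s.
Proof. exact: sumr_ge0. Qed.

Let U_integrable : seg_integrable t0 t1 U.
Proof.
apply: continuous_compact_integrable; first exact: segment_compact.
move=> r; apply: cvg_big => [|j _]; first exact: add_continuous.
have cz := continuous_z j t1 t1_in.
by apply: cvgB; [apply: cvg_norm|]; exact: cz.
Qed.

Let field_ge_on_negative j r : t0 <= r <= t1 -> z j r < 0 -> - h j r <= K * U r.
Proof.
move=> r_in zjr; have /andP[t0r _] := r_in; rewrite zE // in zjr.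
rewrite /h /consensus_field -sumrN /U mulr_sumr; apply: ler_sum => l _.
have A_ge0 := A0 j l r (le_trans t00 t0r).
have : - z l r <= u l r by rewrite /u -[X in X <= _]add0r lerD2r normr_ge0.
rewrite zE // => /(ler_wpM2l A_ge0) zl.
move: (ler_wpM2r (u_ge0 l r) (A_le j l r r_in)) (mulr_ge0_le0 A_ge0 (ltW zjr)).
have -> : - (A j l r * (y l r - y j r)) =
  A j l r * (y j r - m) + A j l r * - (y l r - m) by ring.
lra.
Qed.

Let negative_part_le j s : t0 <= s <= t1 -> u j s <= 2 * K * seg_int t0 s U.
Proof.
move=> s_in; have /andP[t0s st] := s_in.
have [z_ge0|z_lt0] := leP 0 (z j s).
  by rewrite /u ger0_norm // subrr !mulr_ge0 // seg_int_ge0.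
have z_t0 : 0 <= z j t0 by rewrite /z seg_int_pt addr0 subr_ge0.
have [sg [t0sg sgs z_sg z_neg]] := last_nonneg_time t0s (continuous_z j s s_in) z_t0 z_lt0.
have hs := h_integrable j s s_in.
have Us := seg_integrableS (lexx t0) st U_integrable.
have Usg := seg_integrableS t0sg (lexx s) Us.
have hsg := seg_integrableS t0sg (lexx s) hs.
have drop : - z j s <= seg_int sg s (fun r => - h j r).
  by move: z_sg; rewrite seg_intN // /z (seg_int_split t0sg (ltW sgs) hs); lra.
have push : seg_int sg s (fun r => - h j r) <= K * seg_int sg s U.
  rewrite -seg_intZ //; apply: le_seg_int; [exact: seg_integrableN | exact: seg_integrableZ |].
  move=> r /andP[sgr rs]; apply: field_ge_on_negative; last exact: z_neg.
  by rewrite (le_trans t0sg (ltW sgr)) (le_trans rs st).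
have shrink : seg_int sg s U <= seg_int t0 s U.
  by rewrite (seg_int_split t0sg (ltW sgs) Us) lerDr; apply: seg_int_ge0.
by rewrite /u ltr0_norm //; move: (ler_wpM2l K0 shrink); lra.
Qed.

Lemma consensus_ge_preserved_of_bound i : m <= y i t1.
Proof.
have U_le s : t0 <= s <= t1 -> U s <= (2 * K * N%:R) * seg_int t0 s U.
  move=> s_in; apply: le_trans (ler_sum _ (fun j _ => negative_part_le j s s_in)) _.
  by rewrite sumr_const card_ord -mulr_natr; lra.
have U_t1 := gronwall_zero (mulr_ge0 (mulr_ge0 (ler0n _ 2) K0) (ler0n _ N)) t01
  U_integrable (fun s _ => U_ge0 s) U_le t1 t1_in.
have u_t1 : u i t1 = 0.
  by move/eqP: U_t1; rewrite psumr_eq0 // => /allP /(_ i (mem_index_enum _)) /eqP.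
move: (ler_norm (- z i t1)) u_t1; rewrite normrN /u (zE i t1 t1_in); lra.
Qed.

End ConsensusInvariance.

Section ConsensusBounds.
Context {R : realType} {N : nat}.
Implicit Types (y : 'I_N -> R -> R) (A : 'I_N -> 'I_N -> R -> R).

Lemma consensus_ge_preserved {y A t0 t1 m} : nonneg_weights A -> locally_bounded_weights A ->
  consensus_solution y A -> 0 <= t0 -> t0 <= t1 ->
  (forall j, m <= y j t0) -> forall i, m <= y i t1.
Proof.
move=> A0 Abnd ysol t00 t01 y_ge; have [K AK] := Abnd t1 (le_trans t00 t01).
apply: (consensus_ge_preserved_of_bound y A t0 t1 `|K|) => // i j s /andP[t0s st].
by rewrite (le_trans (AK i j s _)) ?ler_norm // (le_trans t00 t0s) st.
Qed.

Lemma consensus_le_preserved {y A t0 t1 m} : nonneg_weights A -> locally_bounded_weights A ->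
  consensus_solution y A -> 0 <= t0 -> t0 <= t1 ->
  (forall j, y j t0 <= m) -> forall i, y i t1 <= m.
Proof.
move=> A0 Abnd /consensus_solutionN ysol t00 t01 y_le i; rewrite -lerN2.
by apply: (consensus_ge_preserved A0 Abnd ysol t00 t01) => j; rewrite lerN2.
Qed.

End ConsensusBounds.

Definition consensus_rate {R : realType} (N : nat) (mlo mhi mu T : R) :=
  1 - 2^-1 * (mlo * mu * T / (N%:R + mlo * mu * T))
    * expR (- (2 * ((N%:R - 1) / N%:R) * T * mhi)).

Section ConsensusContraction.
Context {R : realType} {N : nat} {A M : 'I_N -> 'I_N -> R -> R} {mlo mhi mu T t0 : R}.
Hypotheses (A0 : nonneg_weights A) (Abnd : locally_bounded_weights A).
Hypotheses (A_le : forall i j s, 0 <= s -> A i j s <= mhi / N%:R)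
  (A_ge : forall i j s, 0 <= s -> mlo / N%:R * M i j s <= A i j s)
  (M_ge0 : forall i j s, 0 <= s -> 0 <= M i j s)
  (M_int : forall i j, seg_integrable t0 (t0 + T) (M i j))
  (M_PE : forall i j, mu * T <= seg_int t0 (t0 + T) (M i j)).
Hypotheses (N_gt0 : (0 < N)%N) (t00 : 0 <= t0) (T_gt0 : 0 < T).
Hypotheses (mlo_gt0 : 0 < mlo) (mhi_ge0 : 0 <= mhi) (mu_ge0 : 0 <= mu).

Let al := (N%:R - 1) / N%:R * mhi.
Let ET := expR (- al * T).
Let q := mlo * mu * T / (N%:R + mlo * mu * T).
Let t1 := t0 + T.

Let t01 : t0 <= t1.
Proof. by rewrite /t1 lerDl ltW. Qed.

Let N_pos : (0 : R) < N%:R.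
Proof. by rewrite ltr0n. Qed.

Let al_ge0 : 0 <= al.
Proof. by rewrite mulr_ge0 // divr_ge0 // subr_ge0 ler1n. Qed.

Let ET_le1 : ET <= 1.
Proof. by rewrite expR_le1 mulNr oppr_le0 mulr_ge0 // ltW. Qed.

Let a_ge0 : 0 <= mlo * mu * T.
Proof. by rewrite !mulr_ge0 // ltW. Qed.

Let q_ge0 : 0 <= q.
Proof. by rewrite divr_ge0 // addr_ge0. Qed.

Let q_le1 : q <= 1.
Proof. by rewrite ler_pdivrMr ?mul1r ?lerDr // ltr_wpDr. Qed.

Let q_le : q <= mlo * mu * T / N%:R.
Proof. by rewrite ler_wpM2l // lef_pV2 ?posrE ?lerDl // ltr_wpDr. Qed.

Section Window.
Variables (y : 'I_N -> R -> R) (lo : R).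
Hypotheses (ysol : consensus_solution y A) (y_lo : forall j, lo <= y j t0).

Let y_ge j s : t0 <= s -> lo <= y j s.
Proof. by move=> t0s; exact: consensus_ge_preserved A0 Abnd ysol t00 t0s y_lo j. Qed.

Let field_ge i s : t0 <= s ->
  \sum_(l | l != i) A i l s * (y l s - lo) - al * (y i s - lo) <= consensus_field y A i s.
Proof.
move=> t0s; have s0 := le_trans t00 t0s.
have -> : al = (N%:R - 1) * (mhi / N%:R) by rewrite /al; ring.
apply: consensus_sum_lower_bound => [l|l]; last exact: y_ge.
by rewrite A0 ?A_le.
Qed.

Let shifted_solution i t : t0 <= t ->
  y i t - lo = y i t0 - lo + seg_int t0 t (consensus_field y A i).
Proof. by move=> t0t; have [_ ->] := consensus_solution_from i ysol t00 t0t; ring. Qed.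

Lemma window_decay k D : 0 <= D -> D <= y k t0 - lo ->
  forall s, t0 <= s <= t1 -> ET * D <= y k s - lo.
Proof.
move=> D0 Dk s /andP[t0s st1].
have [h_int _] := consensus_solution_from k ysol t00 t0s.
apply: le_trans (comparison_principle (z := fun r => y k r - lo) (b := fun=> 0)
  al_ge0 t0s h_int _ _ _ _ Dk).
- rewrite seg_int_cst0 addr0 ler_wpM2r // ler_expR !mulNr lerN2 ler_wpM2l //.
  by rewrite lerBlDl.
- by apply: continuous_seg_integrable => r; exact: cvg_cst.
- by move=> r /andP[t0r _]; rewrite shifted_solution.
- by move=> r _.
- move=> r /andP[t0r _]; apply: le_trans _ (field_ge k r t0r); rewrite lerD2r.
  by apply: sumr_ge0 => l _; rewrite mulr_ge0 ?subr_ge0 ?y_ge // A0 // (le_trans t00).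
Qed.

Lemma window_spread i k E : i != k -> 0 <= E ->
  (forall s, t0 <= s <= t1 -> E <= y k s - lo) ->
  ET * (mlo / N%:R * E * (mu * T)) <= y i t1 - lo.
Proof.
move=> ik E0 Ek; have [h_int _] := consensus_solution_from i ysol t00 t01.
have c0 : 0 <= mlo / N%:R by rewrite divr_ge0 // ltW.
pose b s := mlo / N%:R * E * M i k s.
have b_int : seg_integrable t0 t1 b by exact: seg_integrableZ.
have b_ge0 s : t0 <= s <= t1 -> 0 <= b s.
  by move=> /andP[t0s _]; apply: mulr_ge0; [exact: mulr_ge0 | exact/M_ge0/(le_trans t00)].
have b_le s : t0 <= s <= t1 -> b s - al * (y i s - lo) <= consensus_field y A i s.
  move=> s_in; have /andP[t0s _] := s_in; have s0 := le_trans t00 t0s.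
  apply: le_trans (field_ge i s t0s); rewrite lerD2r (bigD1 k) 1?eq_sym //=.
  rewrite -[X in X <= _]addr0 lerD ?sumr_ge0 // => [|l _].
    by rewrite /b mulrAC ler_pM ?A_ge ?Ek //; exact: mulr_ge0 c0 (M_ge0 i k s s0).
  by rewrite mulr_ge0 ?subr_ge0 ?y_ge // A0.
have z_eq t : t0 <= t <= t1 -> y i t - lo = y i t0 - lo + seg_int t0 t (consensus_field y A i).
  by move=> /andP[t0t _]; exact: shifted_solution.
have y_i0 : 0 <= y i t0 - lo by rewrite subr_ge0.
have := comparison_principle (z := fun r => y i r - lo) al_ge0 t01 h_int b_int z_eq b_ge0 b_le y_i0.
rewrite (_ : t1 - t0 = T) ?add0r ?seg_intZ /t1 //; last by ring.
by move=> H; apply: le_trans H; rewrite ler_wpM2l ?expR_ge0 // ler_wpM2l ?mulr_ge0 // ltW.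
Qed.

Lemma window_gain k D : 0 <= D -> D <= y k t0 - lo ->
  forall i, lo + ET ^+ 2 * q * D <= y i t1.
Proof.
move=> D0 Dk i; have decay := window_decay k D D0 Dk.
have ET0 : 0 <= ET := expR_ge0 _.
rewrite -lerBrDl; have [->|ik] := eqVneq i k.
  apply: le_trans (decay t1 _); last by rewrite t01 lexx.
  rewrite expr2 ler_wpM2r // -mulrA -[X in _ <= X]mulr1 ler_wpM2l //.
  by rewrite -[1]mulr1 ler_pM.
apply: le_trans (window_spread i k (ET * D) ik (mulr_ge0 ET0 D0) decay).
have -> : ET * (mlo / N%:R * (ET * D) * (mu * T)) = ET ^+ 2 * (mlo * mu * T / N%:R) * D.
  by rewrite expr2; field; rewrite gt_eqF.
by rewrite ler_wpM2r // ler_wpM2l // exprn_ge0.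
Qed.

End Window.

Lemma consensus_rate_ge0 : 0 <= consensus_rate N mlo mhi mu T.
Proof.
rewrite /consensus_rate -/q subr_ge0 -mulrA ler_pdivrMl // mulr1.
apply: le_trans (_ : 1 * 1 <= 2); last by rewrite mulr1 ler1n.
by rewrite ler_pM ?expR_ge0 // expR_le1 oppr_le0 !mulr_ge0 ?divr_ge0 ?subr_ge0 ?ler1n // ltW.
Qed.

Lemma window_contraction y lo hi : consensus_solution y A -> (forall j, lo <= y j t0 <= hi) ->
  forall i l, y i t1 - y l t1 <= consensus_rate N mlo mhi mu T * (hi - lo).
Proof.
move=> ysol y_in i l.
have rateE : consensus_rate N mlo mhi mu T = 1 - 2^-1 * (ET ^+ 2 * q).
  rewrite /consensus_rate /ET -expRM_natl.
  have -> : 2%:R * (- al * T) = - (2 * ((N%:R - 1) / N%:R) * T * mhi) by rewrite /al; ring.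
  by rewrite /q; ring.
have y_lo j : lo <= y j t0 by case/andP: (y_in j).
have y_hi j : y j t0 <= hi by case/andP: (y_in j).
have y_t1_hi j : y j t1 <= hi := consensus_le_preserved A0 Abnd ysol t00 t01 y_hi j.
have y_t1_lo j : lo <= y j t1 := consensus_ge_preserved A0 Abnd ysol t00 t01 y_lo j.
(* Agent [k] starts in the upper or the lower half of [[lo, hi]]; the latter case is
   the former for the negated system. *)
pose k := Ordinal N_gt0; pose D := (hi - lo) / 2.
have D0 : 0 <= D by rewrite divr_ge0 // subr_ge0 (le_trans (y_lo k)).
rewrite rateE; have [Dk|Dk] := lerP D (y k t0 - lo).
  by move: (window_gain _ _ ysol y_lo k D D0 Dk l) (y_t1_hi i); rewrite /D; lra.
have ysolN := consensus_solutionN ysol.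
have y_loN j : - hi <= - y j t0 by rewrite lerN2.
have DkN : D <= - y k t0 - - hi by move: Dk; rewrite /D; lra.
by move: (window_gain _ _ ysolN y_loN k D D0 DkN i) (y_t1_lo l); rewrite /D; lra.
Qed.

End ConsensusContraction.

Section RowDot.
Context {R : realType} {d : nat}.
Implicit Types (u v w : 'rV[R]_d).

Definition rdot u v := \sum_(k < d) u ord0 k * v ord0 k.

Lemma rdotC u v : rdot u v = rdot v u.
Proof. by apply: eq_bigr => k _; rewrite mulrC. Qed.

Lemma rdotBl u v w : rdot (u - v) w = rdot u w - rdot v w.
Proof. by rewrite /rdot -sumrB; apply: eq_bigr => k _; rewrite !mxE mulrBl. Qed.

Lemma enorm_ge0 v : 0 <= enorm v.
Proof. exact: sqrtr_ge0. Qed.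

Lemma enorm_sqr v : enorm v ^+ 2 = rdot v v.
Proof.
rewrite sqr_sqrtr; last by apply: sumr_ge0 => k _; exact: sqr_ge0.
by apply: eq_bigr => k _; rewrite expr2.
Qed.

Lemma rdot_enorm0 v w : enorm v = 0 -> rdot v w = 0.
Proof.
move=> /eqP; rewrite sqrtr_eq0 => v_le0.
have v0 : \sum_(k < d) v ord0 k ^+ 2 = 0.
  by apply/eqP; rewrite eq_le v_le0 sumr_ge0 // => k _; exact: sqr_ge0.
rewrite /rdot big1 // => k _.
have /eqP : v ord0 k ^+ 2 = 0 by exact: (psumr_eq0P (fun k _ => sqr_ge0 _) v0).
by rewrite sqrf_eq0 => /eqP ->; rewrite mul0r.
Qed.

Lemma rdot_le_enorm u v : rdot u v <= enorm u * enorm v.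
Proof.
set a := enorm u; set b := enorm v.
have [a0|a_neq0] := eqVneq a 0; first by rewrite rdot_enorm0 // a0 mul0r.
have [b0|b_neq0] := eqVneq b 0; first by rewrite rdotC rdot_enorm0 // b0 mulr0.
have ab_gt0 : 0 < a * b by rewrite mulr_gt0 // lt0r ?a_neq0 ?b_neq0 enorm_ge0.
have : 0 <= \sum_(k < d) (b * u ord0 k - a * v ord0 k) ^+ 2.
  by apply: sumr_ge0 => k _; exact: sqr_ge0.
have -> : \sum_(k < d) (b * u ord0 k - a * v ord0 k) ^+ 2 =
    b ^+ 2 * rdot u u - 2 * a * b * rdot u v + a ^+ 2 * rdot v v.
  by rewrite /rdot !mulr_sumr -sumrB -big_split /=; apply: eq_bigr => k _; ring.
rewrite -!enorm_sqr -/a -/b.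
have -> : b ^+ 2 * a ^+ 2 - 2 * a * b * rdot u v + a ^+ 2 * b ^+ 2 =
  2 * (a * b) * (a * b - rdot u v) by ring.
by rewrite pmulr_rge0 ?subr_ge0 // mulr_gt0.
Qed.

End RowDot.

Section Configurations.
Context {R : realType} {N d : nat}.
Implicit Types (y : config R N d).

Lemma config_diam_ge0 y : 0 <= config_diam y.
Proof. exact: bigmax_ge_id. Qed.

Lemma le_config_diam y a b : enorm (y a - y b) <= config_diam y.
Proof.
apply: le_trans (le_bigmax _ (fun i => \big[Num.max/0]_(j < N) enorm (y i - y j)) a).
exact: le_bigmax (fun j => enorm (y a - y j)) b.
Qed.

Lemma le_config_radius y l : enorm (y l) <= config_radius y.
Proof. exact: le_bigmax. Qed.

Lemma enorm_le_coord (v : 'rV[R]_d) B : (forall k, `|v ord0 k| <= B) ->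
  enorm v <= Num.sqrt (\sum_(k < d) B ^+ 2).
Proof.
move=> vB; rewrite ler_sqrt; last by apply: sumr_ge0 => k _; exact: sqr_ge0.
by apply: ler_sum => k _; rewrite -real_normK ?num_real // lerXn2r ?nnegrE // (le_trans _ (vB k)).
Qed.

Lemma cnorm_le_coord y B : (forall i k, `|y i ord0 k| <= B) ->
  cnorm y <= Num.sqrt (\sum_(i < N) \sum_(k < d) B ^+ 2).
Proof.
move=> yB; rewrite ler_sqrt; last by apply: sumr_ge0 => i _; apply: sumr_ge0 => k _; exact: sqr_ge0.
apply: ler_sum => i _; apply: ler_sum => k _.
by rewrite -real_normK ?num_real // lerXn2r ?nnegrE // (le_trans _ (yB i k)).
Qed.

End Configurations.

Lemma le_lipschitz_bound {R : realType} {a b L n B : R} :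
  `|a - b| <= L * n -> 0 <= n -> n <= B -> a <= `|b| + `|L| * B.
Proof.
move=> ab n0 nB; have Ln : L * n <= `|L| * B.
  by rewrite (le_trans (ler_wpM2r n0 (ler_norm L))) // ler_wpM2l.
by move: (ler_norm (a - b)) (ler_norm b); lra.
Qed.

Section Model.
Context {R : realType} {N d : nat} {M : 'I_N -> 'I_N -> R -> R}.
Context {lam : 'I_N -> config R N d -> R} {phi : 'I_N -> 'I_N -> 'rV[R]_d -> 'rV[R]_d -> R}.
Context {x : R -> config R N d}.
Hypotheses (M_range : forall i j t, 0 <= t -> 0 <= M i j t <= 1)
  (lamL : forall i, lipschitz_config (lam i)) (lam_gt0 : forall i y, 0 < lam i y)
  (phiL : forall i j, lipschitz_pair (phi i j)) (phi_gt0 : forall i j a b, 0 < phi i j a b)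
  (xsol : caratheodory_solution lam phi M x).

Definition interaction_weight i j s := lam i (x s) / N%:R * (M i j s * phi i j (x s i) (x s j)).

Definition projection (w : 'rV[R]_d) i s := rdot (x s i) w.

Lemma rhs_rdot (w : 'rV[R]_d) i s :
  \sum_(k < d) w ord0 k * rhs lam phi M x i k s =
  consensus_field (projection w) interaction_weight i s.
Proof.
rewrite /rhs /consensus_field.
under eq_bigr do rewrite !mulr_sumr.
rewrite exchange_big /=; apply: eq_bigr => j _.
rewrite /projection -rdotBl /rdot /interaction_weight mulr_sumr; apply: eq_bigr => k _.
by rewrite !mxE; ring.
Qed.

Lemma projection_consensus_solution w : consensus_solution (projection w) interaction_weight.
Proof.
move=> i t t0; have xk k := xsol t t0 i k.
have int_k k : seg_integrable 0 t (fun s => w ord0 k * rhs lam phi M x i k s).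
  exact/seg_integrableZ/(xk k).1.
have -> : consensus_field (projection w) interaction_weight i =
    fun s => \sum_(k < d) w ord0 k * rhs lam phi M x i k s.
  by apply/funext => s; rewrite rhs_rdot.
split; first exact: seg_integrable_sum.
rewrite seg_int_sum // /projection /rdot -big_split /=; apply: eq_bigr => k _.
by rewrite (xk k).2 seg_intZ; [rewrite /seg_int; ring | exact: (xk k).1].
Qed.

Lemma interaction_weight_ge0 : nonneg_weights interaction_weight.
Proof.
move=> i j s s0; have /andP[M0 _] := M_range i j s s0.
by rewrite !mulr_ge0 ?invr_ge0 // ltW.
Qed.

Lemma trajectory_coord_bounded t1 : 0 <= t1 ->
  exists B, forall s i k, 0 <= s <= t1 -> `|x s i ord0 k| <= B.
Proof.
move=> t10; pose f i k := rhs lam phi M x i k.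
pose B i k := `|x 0 i ord0 k| + seg_int 0 t1 (fun s => `|f i k s|).
exists (\big[Num.max/0]_i \big[Num.max/0]_k B i k) => s i k /andP[s0 st1].
apply: le_trans (le_trans (le_bigmax _ (B i) k) (le_bigmax _ _ i)).
have [int_s ->] := xsol s s0 i k; have [int_t1 _] := xsol t1 t10 i k.
apply: le_trans (ler_normD _ _) _; rewrite lerD2l.
apply: le_trans (le_normr_Rintegral _ int_s) _ => //.
have int_norm : seg_integrable 0 t1 (fun r => `|f i k r|) by exact: integrable_norm.
rewrite [X in _ <= X](seg_int_split s0 st1 int_norm) lerDl.
exact: seg_int_ge0.
Qed.

Lemma interaction_weight_locally_bounded : locally_bounded_weights interaction_weight.
Proof.
move=> t1 t10; have [B xB] := trajectory_coord_bounded t1 t10.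
have [Ll lamLl] := boolp.choice lamL.
have [Lp phiLp] := boolp.choice (fun ij : 'I_N * 'I_N => phiL ij.1 ij.2).
pose EB := Num.sqrt (\sum_(k < d) B ^+ 2).
pose lam_bnd i := `|lam i (fun=> 0)| + `|Ll i| * Num.sqrt (\sum_(i < N) \sum_(k < d) B ^+ 2).
pose phi_bnd i j := `|phi i j 0 0| + `|Lp (i, j)| * Num.sqrt (EB ^+ 2 + EB ^+ 2).
pose K i j := lam_bnd i / N%:R * phi_bnd i j.
exists (\big[Num.max/0]_i \big[Num.max/0]_j K i j) => i j s s_in.
apply: le_trans (le_trans (le_bigmax _ (K i) j) (le_bigmax _ _ i)).
have /andP[s0 _] := s_in; have /andP[M0 M1] := M_range i j s s0.
have xsB k : enorm (x s k) <= EB by apply: enorm_le_coord => l; exact: xB.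
have lam_le : lam i (x s) <= lam_bnd i.
  rewrite /lam_bnd; apply: (le_lipschitz_bound (lamLl i (x s) (fun=> 0))); first exact: sqrtr_ge0.
  by apply: cnorm_le_coord => l k; rewrite subr0; exact: xB.
have phi_le : phi i j (x s i) (x s j) <= phi_bnd i j.
  rewrite /phi_bnd; apply: (le_lipschitz_bound (phiLp (i, j) (x s i) (x s j) 0 0)).
    exact: sqrtr_ge0.
  by rewrite !subr0 ler_sqrt ?addr_ge0 ?sqr_ge0 // lerD // lerXn2r ?nnegrE ?enorm_ge0 ?sqrtr_ge0.
have lam0 := ltW (lam_gt0 i (x s)); have phi0 := ltW (phi_gt0 i j (x s i) (x s j)).
rewrite /interaction_weight /K ler_pM ?mulr_ge0 ?invr_ge0 //; first by rewrite ler_wpM2r ?invr_ge0.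
by rewrite -[phi_bnd i j]mul1r ler_pM.
Qed.

Lemma trajectory_in_ball i s : 0 <= s -> enorm (x s i) <= config_radius (x 0).
Proof.
move=> s0; set w := x s i; set r := config_radius (x 0).
have y0_le j : projection w j 0 <= r * enorm w.
  apply: le_trans (rdot_le_enorm _ _) _.
  by rewrite ler_wpM2r ?enorm_ge0 // le_config_radius.
have := consensus_le_preserved interaction_weight_ge0 interaction_weight_locally_bounded
  (projection_consensus_solution w) (lexx 0) s0 y0_le i.
rewrite /projection -/w -enorm_sqr expr2.
have [->|w_neq0] := eqVneq (enorm w) 0; first by rewrite bigmax_ge_id.
by rewrite ler_pM2r // lt0r w_neq0 enorm_ge0.
Qed.

Section Contraction.
Context {mlo mhi : R}.
Hypotheses (mlo_le : forall i j (y : config R N d),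
    (forall k, enorm (y k) <= config_radius (x 0)) -> mlo <= lam i y * phi i j (y i) (y j))
  (mhi_ge : forall i j (y : config R N d),
    (forall k, enorm (y k) <= config_radius (x 0)) -> lam i y * phi i j (y i) (y j) <= mhi).

Let weightE i j s :
  interaction_weight i j s = lam i (x s) * phi i j (x s i) (x s j) / N%:R * M i j s.
Proof. by rewrite /interaction_weight; ring. Qed.

Lemma interaction_weight_le i j s : 0 <= s -> interaction_weight i j s <= mhi / N%:R.
Proof.
move=> s0; have /andP[M0 M1] := M_range i j s s0.
have lp0 := mulr_ge0 (ltW (lam_gt0 i (x s))) (ltW (phi_gt0 i j (x s i) (x s j))).
rewrite weightE -[mhi / N%:R]mulr1 ler_pM ?divr_ge0 //.
by rewrite ler_wpM2r ?invr_ge0 // mhi_ge // => k; exact: trajectory_in_ball.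
Qed.

Lemma interaction_weight_ge i j s : 0 <= s -> mlo / N%:R * M i j s <= interaction_weight i j s.
Proof.
move=> s0; have /andP[M0 _] := M_range i j s s0.
rewrite weightE ler_wpM2r // ler_wpM2r ?invr_ge0 // mlo_le // => k.
exact: trajectory_in_ball.
Qed.

Context {mu T : R}.
Hypotheses (M_meas : forall i j, measurable_fun (`[0, +oo[ : set R) (M i j))
  (T_gt0 : 0 < T) (mu_gt0 : 0 < mu)
  (PE : forall i j t, 0 <= t -> T^-1 * Rintegral lebesgue_measure `[t, t + T] (M i j) >= mu)
  (N_gt0 : (0 < N)%N) (mlo_gt0 : 0 < mlo) (mhi_ge0 : 0 <= mhi).

Lemma config_diam_step t0 : 0 <= t0 ->
  config_diam (x (t0 + T)) <= consensus_rate N mlo mhi mu T * config_diam (x t0).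
Proof.
move=> t00; set D0 := config_diam (x t0); set rate := consensus_rate N mlo mhi mu T.
have M_ge0 i j s : 0 <= s -> 0 <= M i j s by move=> s0; case/andP: (M_range i j s s0).
have M_int i j : seg_integrable t0 (t0 + T) (M i j).
  apply: (seg_integrable_bounded (`[0, +oo[ : set R) 1) => //.
    by apply: subset_itv; rewrite bnd_simp.
  move=> t; rewrite /= in_itv /= andbT => t_ge0.
  by case/andP: (M_range i j t t_ge0) => M0 M1; rewrite ger0_norm.
have M_PE i j : mu * T <= seg_int t0 (t0 + T) (M i j).
  by have := PE i j t0 t00; rewrite ler_pdivlMl // mulrC.
have rate_ge0 : 0 <= rate := consensus_rate_ge0 N_gt0 T_gt0 mlo_gt0 mhi_ge0 (ltW mu_gt0).
have rD0_ge0 : 0 <= rate * D0 by rewrite mulr_ge0 // config_diam_ge0.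
apply: bigmax_le => // p _; apply: bigmax_le => // q _.
set w := x (t0 + T) p - x (t0 + T) q; pose k := Ordinal N_gt0.
case: (@arg_maxP _ _ 'I_N k xpredT (fun j => projection w j t0) isT) => a _ a_max.
case: (@arg_minP _ _ 'I_N k xpredT (fun j => projection w j t0) isT) => b _ b_min.
have y_in j : projection w b t0 <= projection w j t0 <= projection w a t0.
  by apply/andP; split; [exact: b_min | exact: a_max].
have := window_contraction interaction_weight_ge0 interaction_weight_locally_bounded
  interaction_weight_le interaction_weight_ge M_ge0 M_int M_PE N_gt0 t00 T_gt0 mlo_gt0 mhi_ge0
  (ltW mu_gt0) _ _ _ (projection_consensus_solution w) y_in p q.
rewrite /projection -!rdotBl -/w -/rate => sq_le.
have width : rdot (x t0 a - x t0 b) w <= D0 * enorm w.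
  by apply: le_trans (rdot_le_enorm _ _) _; rewrite ler_wpM2r ?enorm_ge0 ?le_config_diam.
have : enorm w * enorm w <= enorm w * (rate * D0).
  by rewrite -expr2 enorm_sqr (le_trans sq_le) // mulrCA ler_wpM2l // mulrC.
have [->|w_neq0] := eqVneq (enorm w) 0; first by [].
by rewrite ler_pM2l // lt0r w_neq0 enorm_ge0.
Qed.

End Contraction.

End Model.

Theorem corollary2 (R : realType) (N d : nat) (hN : (2 <= N)%N) (hd : (1 <= d)%N)
  (M : 'I_N -> 'I_N -> R -> R)
  (lam : 'I_N -> config R N d -> R)
  (phi : 'I_N -> 'I_N -> 'rV[R]_d -> 'rV[R]_d -> R)
  (x : R -> config R N d)
  (mlo mhi T mu : R)
  (hMmeas : forall i j, measurable_fun (`[0, +oo[ : set R) (M i j))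
  (hMrange : forall i j t, 0 <= t -> 0 <= M i j t <= 1)
  (hlamL : forall i, lipschitz_config (lam i))
  (hlampos : forall i y, 0 < lam i y)
  (hphiL : forall i j, lipschitz_pair (phi i j))
  (hphipos : forall i j a b, 0 < phi i j a b)
  (hsol : caratheodory_solution lam phi M x)
  (hmlo_lb : forall i j (y : config R N d), (forall k, enorm (y k) <= config_radius (x 0)) ->
      mlo <= lam i y * phi i j (y i) (y j))
  (hmlo_att : exists i j (y : config R N d), (forall k, enorm (y k) <= config_radius (x 0)) /\
      lam i y * phi i j (y i) (y j) = mlo)
  (hmhi_ub : forall i j (y : config R N d), (forall k, enorm (y k) <= config_radius (x 0)) ->
      lam i y * phi i j (y i) (y j) <= mhi)
  (hmhi_att : exists i j (y : config R N d), (forall k, enorm (y k) <= config_radius (x 0)) /\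
      lam i y * phi i j (y i) (y j) = mhi)
  (hT : 0 < T) (hmu : 0 < mu)
  (hPE : forall i j t, 0 <= t ->
      T^-1 * Rintegral lebesgue_measure `[t, t + T] (M i j) >= mu) :
  forall n : nat,
    config_diam (x (n%:R * T)) <=
    (1 - 2^-1 * (mlo * mu * T / (N%:R + mlo * mu * T))
         * expR (- (2 * ((N%:R - 1) / N%:R) * T * mhi))) ^+ n * config_diam (x 0).
Proof.
have N_gt0 : (0 < N)%N by apply: leq_trans hN.
have mlo_gt0 : 0 < mlo by have [i [j [y [_ <-]]]] := hmlo_att; exact: mulr_gt0.
have mhi_ge0 : 0 <= mhi by have [i [j [y [_ <-]]]] := hmhi_att; rewrite mulr_ge0 // ltW.
have step := config_diam_step hMrange hlamL hlampos hphiL hphipos hsol hmlo_lb hmhi_ub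
  hMmeas hT hmu hPE N_gt0 mlo_gt0 mhi_ge0.
have rate_ge0 := consensus_rate_ge0 N_gt0 hT mlo_gt0 mhi_ge0 (ltW hmu).
rewrite -/(consensus_rate N mlo mhi mu T).
elim=> [|n IH]; first by rewrite mul0r expr0 mul1r.
have nT_ge0 : 0 <= n%:R * T by rewrite mulr_ge0 // ltW.
rewrite mulrSr mulrDl mul1r exprS -mulrA.
by apply: le_trans (step _ nT_ge0) _; rewrite ler_wpM2l.
Qed.
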